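(* Let $M^n$ be a hypersurface isometrically immersed in an $(n+1)$-dimensional Riemannian manifold $\overline{M}^{n+1}$, with Levi-Civita connection $\nabla$ on $M$ and shape operator $A$. Let $\mu_1: M \to \mathbb{R}$ be a smooth function and let $k \geq 1$ be an integer. Then for every point $p\in M$ and every tangent vector $v \in T_pM$, $$\operatorname{tr}\left( T_{k-1}^{\infty}(\mu_1,A)\circ \nabla_v A\right) = \left\langle \nabla \sigma_k^{\infty}(\mu_1,A) - \sigma_{k-1}^{\infty}(\mu_1,A)\,\nabla \mu_1 ,\, v\right\rangle .$$
   Context: The shape operator is $AX = -(\overline{\nabla}_X N)^{\top}$, where $N$ is a unit normal field along $M$, $\overline{\nabla}$ is the Levi-Civita connection of $\overline{M}$, and $\top$ denotes orthogonal projection onto $TM$; $A$ is self-adjoint with eigenvalues (principal curvatures) $\lambda_1,\dots,\lambda_n$. For $m\ge 0$, $\sigma_m(A)=\sigma_m(\lambda_1,\dots,\lambda_n)$ is the $m$-th elementary symmetric function of the eigenvalues ($\sigma_0=1$, $\sigma_m = 0$ for $m<0$). The weighted elementary symmetric functions are $\sigma_m^{\infty}(\mu_1,A) = \sum_{j=0}^{m} \frac{\mu_1^j}{j!}\,\sigma_{m-j}(A)$ (this agrees with Case's recursive definition of $\sigma_m^\infty$), viewed as a smooth function $p\mapsto \sigma_m^{\infty}(\mu_1(p),A_p)$ on $M$, and $\nabla \sigma_m^\infty(\mu_1,A)$ denotes its gradient on $M$. The weighted Newton transformations are $T_{m}^{\infty}(\mu_1,A) = \sum_{j=0}^{m} (-1)^j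 \sigma_{m-j}^{\infty}(\mu_1,A)\, A^j$, equivalently $T_0^\infty = I$ and $T_m^\infty = \sigma_m^\infty(\mu_1,A) I - A T_{m-1}^\infty$ for $m\ge1$. Here $\nabla_v A$ is the covariant derivative of the $(1,1)$-tensor $A$ in direction $v$. *)

(* Local-coordinate (chart) model of M^n. *)
From HB Require Import structures.
From mathcomp Require Import all_boot all_order all_algebra.
From mathcomp Require Import all_classical all_reals all_analysis.
Set Implicit Arguments. Unset Strict Implicit. Unset Printing Implicit Defensive.
Import Order.TTheory GRing.Theory Num.Theory.
Import numFieldNormedType.Exports.
Local Open Scope classical_set_scope.
Local Open Scope ring_scope.

Section Defs.
Variables (R : realType) (n : nat).

(* Points of the chart domain and tangent vectors (coordinate components). *)
Notation V := 'cV[R]_n.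

Definition coordvec (i : 'I_n) : V := delta_mx i 0.

(* sigma_m(A): m-th elementary symmetric function of the eigenvalues of A
   (with multiplicity), i.e. (-1)^m times the coefficient of X^(n-m) of the
   characteristic polynomial; sigma_m = 0 for m > n. *)
Definition sigma (m : nat) (A : 'M[R]_n) : R :=
  if (m <= n)%N then (-1) ^+ m * (char_poly A)`_(n - m) else 0.

Definition sigmaInf (m : nat) (mu : R) (A : 'M[R]_n) : R :=
  \sum_(j < m.+1) (mu ^+ j / (j`!)%:R) * sigma (m - j) A.

Definition Tinf (m : nat) (mu : R) (A : 'M[R]_n) : 'M[R]_n :=
  \sum_(j < m.+1) ((-1) ^+ j * sigmaInf (m - j) mu A) *: A ^+ j.

(* Riemannian metric g (matrix g_ij at each point).  Christoffel symbols of
   its Levi-Civita connection: Gamma k i j = Gamma^k_{ij}. *)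
Definition christoffel (g : V -> 'M[R]_n) (x : V) (k i j : 'I_n) : R :=
  2^-1 * \sum_(l < n) (invmx (g x)) k l *
     ('D_(coordvec i) (fun y => g y j l) x
      + 'D_(coordvec j) (fun y => g y i l) x
      - 'D_(coordvec l) (fun y => g y i j) x).

(* Covariant derivative nabla_v A of a (1,1)-tensor field A (A x k j = A^k_j):
   (nabla_v A)^k_j = v(A^k_j) + Gamma^k_{il} v^i A^l_j - Gamma^l_{ij} v^i A^k_l *)
Definition covD (g : V -> 'M[R]_n) (A : V -> 'M[R]_n) (v : V) (x : V)
  : 'M[R]_n :=
  \matrix_(k < n, j < n)
    ('D_v (fun y => A y k j) x
     + \sum_(i < n) \sum_(l < n) christoffel g x k i l * v i 0 * A x l j
     - \sum_(i < n) \sum_(l < n) christoffel g x l i j * v i 0 * A x k l).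

Definition inner (g : V -> 'M[R]_n) (x : V) (u w : V) : R :=
  (u^T *m g x *m w) 0 0.

Definition grad (g : V -> 'M[R]_n) (f : V -> R) (x : V) : V :=
  invmx (g x) *m \col_(l < n) 'D_(coordvec l) f x.

End Defs.

From HB Require Import structures.
From mathcomp Require Import all_boot all_order all_algebra.
From mathcomp Require Import all_classical all_reals all_analysis.
From mathcomp Require Import perm ring zify.
Import Order.TTheory GRing.Theory Num.Theory.
Import numFieldNormedType.Exports.
Local Open Scope classical_set_scope.
Local Open Scope ring_scope.

Set Implicit Arguments. Unset Strict Implicit. Unset Printing Implicit Defensive.

(* Differentiating the characteristic polynomial of A coefficientwise gives
   Jacobi's formula d(char_poly A) = -tr(adj(X - A) dA), and the adjugate
   of X - A is sum_m X^(n-1-m) (-1)^m T_m(A) with T_m the classical Newton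
   transformations (the sum telescopes against X - A; Cayley-Hamilton makes
   T_n(A) vanish).  Hence d sigma_(m+1)(A) = tr(T_m(A) dA).  Weighting by
   mu^j/j!, the derivative of mu^j/j! shifts the index by one, so
   d sigma_(k+1)^oo = sigma_k^oo dmu + tr(T_k^oo dA).  Finally the covariant
   derivative differs from the coordinate derivative dA by a commutator with
   the connection matrix, which is trace-orthogonal to T_k^oo (a polynomial
   in A), and <grad f, v> = df(v). *)

Lemma sum_triangle_exchange (V : nmodType) m (F : nat -> nat -> V) :
  \sum_(i < m.+1) \sum_(j < (m - i).+1) F i j =
  \sum_(j < m.+1) \sum_(i < (m - j).+1) F i j.
Proof.
have square (G : nat -> nat -> V) : \sum_(i < m.+1) \sum_(j < (m - i).+1) G i j =
    \sum_(i < m.+1) \sum_(j < m.+1) (if (i + j <= m)%N then G i j else 0).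
  apply: eq_bigr => i _; rewrite (big_ord_widen m.+1 (G i)) ?ltnS ?leq_subr //.
  rewrite big_mkcond; apply: eq_bigr => j _; have := ltn_ord i.
  by case: (ltnP j (m - i).+1); case: (leqP (i + j) m) => //; lia.
rewrite square exchange_big /= (square (fun j i => F i j)).
by apply: eq_bigr => j _; apply: eq_bigr => i _; rewrite addnC.
Qed.

Section NewtonTransformation.
Variables (R : realType) (n : nat).
Implicit Types (M : 'M[R]_n).

Definition newton m M : 'M[R]_n :=
  \sum_(i < m.+1) ((-1) ^+ i * sigma (m - i) M) *: M ^+ i.

Lemma char_poly_coef_n M : (char_poly M)`_n = 1.
Proof.
by have /monicP := char_poly_monic M; rewrite lead_coefE size_char_poly.
Qed.

Lemma sigma0 M : sigma 0 M = 1.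
Proof. by rewrite /sigma leq0n expr0 mul1r subn0 char_poly_coef_n. Qed.

Lemma sigma_eq0 m M : (n < m)%N -> sigma m M = 0.
Proof. by rewrite /sigma ltnNge => /negbTE ->. Qed.

Lemma newton0 M : newton 0 M = 1%:M.
Proof.
by rewrite /newton big_ord_recl big_ord0 addr0 mul1r subn0 sigma0 scale1r.
Qed.

Lemma newtonS m M : newton m.+1 M = sigma m.+1 M *: 1%:M - M *m newton m M.
Proof.
rewrite /newton big_ord_recl expr0 mul1r subn0; congr (_ + _).
rewrite mulmx_sumr -sumrN; apply: eq_bigr => i _.
by rewrite lift0 subSS exprS mulN1r mulNr scaleNr -scalemxAr mulmxE -exprS.
Qed.

End NewtonTransformation.

(* [(-1)^n *: newton n M] is [char_poly M] evaluated at [M]. *)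
Lemma newton_dim (R : realType) n (M : 'M[R]_n) : newton n M = 0.
Proof.
case: n M => [|n'] M; first exact: flatmx0.
have horner_mxE q : horner_mx M q = \sum_(i < size q) q`_i *: M ^+ i.
  rewrite -{1}(coefK q) poly_def rmorph_sum; apply: eq_bigr => i _.
  rewrite -[LHS]/(horner_mx M (q`_i *: 'X^i)) horner_mxZ rmorphXn /=.
  by rewrite horner_mx_X.
have := Cayley_Hamilton M; rewrite horner_mxE size_char_poly => CH.
have -> : newton n'.+1 M =
    (-1) ^+ n'.+1 *: \sum_(i < n'.+2) (char_poly M)`_i *: M ^+ i.
  rewrite /newton scaler_sumr; apply: eq_bigr => i _.
  have le_in : (i <= n'.+1)%N by rewrite -ltnS.
  by rewrite /sigma leq_subr subKn // mulrA -exprD subnKC // scalerA.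
by rewrite CH scaler0.
Qed.

Lemma newton_eq0 (R : realType) n m (M : 'M[R]_n) :
  (n <= m)%N -> newton m M = 0.
Proof.
move=> le_nm; rewrite -(subnKC le_nm); elim: (m - n)%N => [|i IHi].
  by rewrite addn0 newton_dim.
by rewrite addnS newtonS IHi mulmx0 subr0 sigma_eq0 ?scale0r // ltnS leq_addr.
Qed.

Section AdjugateCharPoly.
Variables (R : realType) (n : nat) (M : 'M[R]_n).

Lemma char_polyE : char_poly M =
  'X^n - \sum_(m < n) 'X^(n - m.+1) * ((-1) ^+ m * sigma m.+1 M)%:P.
Proof.
rewrite -{1}(coefK (char_poly M)) poly_def size_char_poly big_ord_recr /=.
rewrite char_poly_coef_n scale1r addrC; congr (_ + _).
rewrite -sumrN (reindex_inj rev_ord_inj) /=; apply: eq_bigr => i _.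
rewrite /sigma ltn_ord exprS mulN1r mulNr mulrN mulrA -expr2 sqrr_sign mul1r.
by rewrite polyCN mulrN opprK -mul_polyC mulrC.
Qed.

(* By [newtonS], multiplying the right-hand side by [char_poly_mx M] gives a
   telescoping sum equal to [(char_poly M)%:M]. *)
Lemma adj_char_poly_mx : \adj (char_poly_mx M) =
  \sum_(m < n) 'X^(n - m.+1) *: map_mx polyC ((-1) ^+ m *: newton m M).
Proof.
set S := (X in _ = X); set N := char_poly_mx M.
pose P m := map_mx (@polyC R) ((-1) ^+ m *: newton m M).
have newton_step m : M *m ((-1) ^+ m *: newton m M) =
    ((-1) ^+ m * sigma m.+1 M) *: 1%:M + (-1) ^+ m.+1 *: newton m.+1 M.
  rewrite newtonS exprS mulN1r scaleNr scalerBr scalerA opprB addrC subrK.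
  by rewrite -scalemxAr.
have NS : N *m S = (char_poly M)%:M.
  rewrite /S mulmx_sumr (eq_bigr (fun m : 'I_n =>
      ('X^(n - m) *: P m - 'X^(n - m.+1) *: P m.+1)
      - ('X^(n - m.+1) * ((-1) ^+ m * sigma m.+1 M)%:P) *: 1%:M)); last first.
    move=> m _; rewrite -scalemxAr /N /char_poly_mx mulmxBl mul_scalar_mx.
    rewrite -map_mxM newton_step map_mxD scalemx1 map_scalar_mx /= -scalemx1.
    rewrite scalerBr scalerDr !scalerA -exprSr subnSK //.
    by rewrite /P opprD addrA addrAC.
  rewrite sumrB -(big_mkord xpredT
    (fun m => 'X^(n - m) *: P m - 'X^(n - m.+1) *: P m.+1)).
  rewrite (@telescope_sumr_eq _ 0 n (fun m => - ('X^(n - m) *: P m))) //; last first.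
    by move=> m _; rewrite opprK addrC.
  rewrite subnn /P newton_dim scaler0 map_mx0 scaler0 oppr0 sub0r opprK.
  rewrite subn0 newton0 expr0 scale1r map_mx1 -scaler_suml -scalerBl.
  by rewrite -char_polyE scalemx1.
have := congr1 (mulmx (\adj N)) NS.
rewrite mulmxA mul_adj_mx mul_mx_scalar mul_scalar_mx => /matrixP adjNS.
apply/matrixP => i j; have := adjNS i j; rewrite !mxE => adjNS_ij.
by apply: (mulfI (monic_neq0 (char_poly_monic M))); rewrite -adjNS_ij.
Qed.

Lemma coef_adj_char_poly_mx i j m : (m < n)%N ->
  ((\adj (char_poly_mx M)) i j)`_(n - m.+1) = ((-1) ^+ m *: newton m M) i j.
Proof.
move=> lt_mn; rewrite adj_char_poly_mx summxE coef_sum.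
rewrite (bigD1 (Ordinal lt_mn)) //=.
rewrite big1 ?addr0; first by rewrite !mxE coefXnM ltnn subnn coefC.
move=> l /eqP ne_lm; rewrite !mxE coefXnM coefC; case: ifP => // le_ml.
case: eqP => // eq_ml; case: ne_lm; apply: val_inj => /=.
by move: le_ml eq_ml (ltn_ord l); lia.
Qed.

End AdjugateCharPoly.

Section WeightedNewton.
Variables (R : realType) (n : nat) (mu : R) (M : 'M[R]_n).

Lemma Tinf_newton m :
  Tinf m mu M = \sum_(j < m.+1) (mu ^+ j / j`!%:R) *: newton (m - j) M.
Proof.
rewrite /Tinf /sigmaInf (eq_bigr (fun i : 'I_m.+1 => \sum_(j < (m - i).+1)
   ((-1) ^+ i * (mu ^+ j / j`!%:R * sigma (m - i - j) M)) *: M ^+ i)); last first.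
  by move=> i _; rewrite mulr_sumr scaler_suml.
rewrite (sum_triangle_exchange m (fun i j =>
  ((-1) ^+ i * (mu ^+ j / j`!%:R * sigma (m - i - j) M)) *: M ^+ i)).
apply: eq_bigr => j _; rewrite scaler_sumr; apply: eq_bigr => i _.
by rewrite scalerA mulrCA subnAC.
Qed.

Lemma Tinf_comm m : M *m Tinf m mu M = Tinf m mu M *m M.
Proof.
rewrite /Tinf mulmx_sumr mulmx_suml; apply: eq_bigr => i _.
by rewrite -scalemxAr -scalemxAl mulmxE -exprS -exprSr.
Qed.

End WeightedNewton.

(* Both sides are the sum over i of the determinant of N with its i-th row
   replaced by the i-th row of H. *)
Lemma cofactor_sum_leibniz (T : comPzRingType) n (N : 'M[T]_n)
    (H : 'I_n -> 'I_n -> T) :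
  \sum_i \sum_j H i j * cofactor N i j =
  \sum_(s : 'S_n) (-1) ^+ s * \sum_(i <- index_enum 'I_n)
     H i (s i) * \prod_(j <- index_enum 'I_n | j != i) N j (s j).
Proof.
under [RHS]eq_bigr do rewrite mulr_sumr.
rewrite [RHS]exchange_big /=; apply: eq_bigr => i _.
pose Ni := \matrix_(a, b) if a == i then H a b else N a b.
have -> : \sum_j H i j * cofactor N i j = \det Ni.
  rewrite (expand_det_row Ni i); apply: eq_bigr => j _.
  rewrite mxE eqxx; congr (_ * (_ * \det _)).
  by apply/matrixP => a b; rewrite !mxE eq_sym (negbTE (neq_lift i a)).
apply: eq_bigr => s _; congr (_ * _).
rewrite (bigD1 i) //= mxE eqxx; congr (_ * _).
by apply: eq_bigr => j /negbTE ne_ji; rewrite mxE ne_ji.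
Qed.

Section ScalarDerivative.
Variables (R : realType) (V : normedModType R) (x v : V).

Lemma is_derive_sumr (I : Type) (r : seq I) (F : I -> V -> R) (dF : I -> R) :
  (forall i, is_derive x v (F i) (dF i)) ->
  is_derive x v (fun y => \sum_(i <- r) F i y) (\sum_(i <- r) dF i).
Proof.
move=> DF; elim: r => [|i r IHr].
  by rewrite big_nil; under eq_fun do rewrite big_nil; exact: is_derive_cst.
by rewrite big_cons; under eq_fun do rewrite big_cons; exact: is_deriveD.
Qed.

Lemma is_derive_eqr (f : V -> R) (df df' : R) :
  is_derive x v f df -> df = df' -> is_derive x v f df'.
Proof. by move=> + <-. Qed.

Lemma is_derive_cstr (c : R) : is_derive x v (fun=> c) (0 : R).
Proof. exact: is_derive_cst. Qed.

Lemma is_derive_mulr (f g : V -> R) (df dg : R) :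
  is_derive x v f df -> is_derive x v g dg ->
  is_derive x v (fun y => f y * g y) (f x * dg + g x * df).
Proof. by move=> Df Dg; exact: is_deriveM. Qed.

Lemma is_derive_exprn (f : V -> R) (df : R) j : is_derive x v f df ->
  is_derive x v (fun y => f y ^+ j) (j%:R * f x ^+ j.-1 * df).
Proof. by move=> Df; rewrite -exprfctE; exact: is_deriveX. Qed.

End ScalarDerivative.

Lemma is_derive_mx_entry (R : realType) (V : normedModType R) m n
    (A : V -> 'M[R]_(m, n)) (x w : V) i j :
  differentiable A x -> is_derive x w (fun y => A y i j) ('D_w A x i j).
Proof.
move=> dA; rewrite (derive_mx (diff_derivable dA)) mxE.
apply/derivableP/diff_derivable.
exact: differentiable_comp dA (differentiable_coord _ i j).
Qed.

Section PolynomialValuedDerivative.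
Variables (R : realType) (V : normedModType R) (x v : V).

Definition is_derive_poly (f : V -> {poly R}) (df : {poly R}) :=
  forall i, is_derive x v (fun y => (f y)`_i) df`_i.

Lemma is_derive_poly_cst c : is_derive_poly (fun=> c) 0.
Proof. by move=> i; rewrite coef0; exact: is_derive_cst. Qed.

Lemma is_derive_poly_sum (I : Type) (r : seq I) (F : I -> V -> {poly R}) dF :
  (forall i, is_derive_poly (F i) (dF i)) ->
  is_derive_poly (fun y => \sum_(i <- r) F i y) (\sum_(i <- r) dF i).
Proof.
move=> DF i; rewrite coef_sum; under eq_fun do rewrite coef_sum.
by apply: is_derive_sumr => j; exact: DF.
Qed.

Lemma is_derive_polyM f g df dg : is_derive_poly f df -> is_derive_poly g dg ->
  is_derive_poly (fun y => f y * g y) (f x * dg + df * g x).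
Proof.
move=> Df Dg i; under eq_fun do rewrite coefM.
apply: is_derive_eq; first by apply: is_derive_sumr => j; exact: is_derive_mulr.
rewrite coefD !coefM -big_split; apply: eq_bigr => j _.
by rewrite [_ * df`_j]mulrC.
Qed.

Lemma is_derive_poly_prod (I : eqType) (r : seq I) (F : I -> V -> {poly R}) dF :
  uniq r -> (forall i, is_derive_poly (F i) (dF i)) ->
  is_derive_poly (fun y => \prod_(i <- r) F i y)
    (\sum_(i <- r) dF i * \prod_(j <- r | j != i) F j x).
Proof.
move=> + DF; elim: r => [_|i r IHr /= /andP[i_notin_r uniq_r]].
  by rewrite big_nil; under eq_fun do rewrite big_nil; exact: is_derive_poly_cst.
under eq_fun do rewrite big_cons.
have -> : \sum_(k <- i :: r) dF k * \prod_(j <- i :: r | j != k) F j x =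
    F i x * \sum_(k <- r) dF k * \prod_(j <- r | j != k) F j x
    + dF i * \prod_(j <- r) F j x.
  rewrite big_cons big_cons eqxx /= big_rmcond_in; last first.
    by move=> j j_in_r /negPn/eqP eq_ji; rewrite -eq_ji j_in_r in i_notin_r.
  rewrite addrC mulr_sumr.
  congr (_ + _); rewrite !big_seq; apply: eq_bigr => k k_in_r.
  rewrite big_cons; have -> : i != k by apply: contraNneq i_notin_r => ->.
  by rewrite mulrCA.
exact: is_derive_polyM (IHr uniq_r).
Qed.

End PolynomialValuedDerivative.

Lemma is_derive_poly_det (R : realType) (V : normedModType R) (x v : V) n
    (N : V -> 'M[{poly R}]_n) (H : 'I_n -> 'I_n -> {poly R}) :
  (forall i j, is_derive_poly x v (fun y => N y i j) (H i j)) ->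
  is_derive_poly x v (fun y => \det (N y))
    (\sum_i \sum_j H i j * cofactor (N x) i j).
Proof.
move=> DN; rewrite cofactor_sum_leibniz; apply: is_derive_poly_sum => s.
have := is_derive_polyM (is_derive_poly_cst x v ((-1) ^+ s))
  (is_derive_poly_prod (index_enum_uniq _) (fun i => DN i (s i))).
by rewrite mul0r addr0.
Qed.

Section JacobiFormula.
Variables (R : realType) (V : normedModType R) (x v : V) (n : nat).
Variables (A : V -> 'M[R]_n) (B : 'M[R]_n).
Hypothesis DA : forall i j, is_derive x v (fun y => A y i j) (B i j).

Lemma is_derive_poly_char_poly : is_derive_poly x v (fun y => char_poly (A y))
  (\sum_i \sum_j (- B i j)%:P * cofactor (char_poly_mx (A x)) i j).
Proof.
apply: (@is_derive_poly_det _ _ _ _ _ (fun y => char_poly_mx (A y))) => i j l.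
rewrite coefC.
have -> : (fun y => (char_poly_mx (A y) i j)`_l) =
    (fun=> ('X *+ (i == j))`_l) + (fun y => - (if l == 0%N then A y i j else 0)).
  by apply/funext => y; rewrite !mxE coefB coefC /=; case: (l == 0).
rewrite -[X in is_derive _ _ _ X]add0r; apply: is_deriveD.
case: (l == 0%N); first exact: is_deriveN.
rewrite -[X in is_derive _ _ _ X]oppr0; apply: is_deriveN; exact: is_derive_cst.
Qed.

Lemma is_derive_sigma m :
  is_derive x v (fun y => sigma m.+1 (A y)) (\tr (newton m (A x) *m B)).
Proof.
have [lt_mn|le_nm] := ltnP m n; last first.
  have -> : (fun y => sigma m.+1 (A y)) = fun=> 0.
    by apply/funext => y; rewrite sigma_eq0.
  by rewrite newton_eq0 // mul0mx mxtrace0; exact: is_derive_cst.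
have -> : (fun y => sigma m.+1 (A y)) =
    (fun y => (-1) ^+ m.+1 * (char_poly (A y))`_(n - m.+1)).
  by apply/funext => y; rewrite /sigma lt_mn.
apply: is_derive_eqr.
  exact: is_derive_mulr (is_derive_cstr _ _ _) (is_derive_poly_char_poly _).
rewrite mulr0 addr0 mxtrace_mulC coef_sum mulr_sumr; apply: eq_bigr => i _.
rewrite mxE coef_sum mulr_sumr; apply: eq_bigr => j _.
have -> : cofactor (char_poly_mx (A x)) i j = (\adj (char_poly_mx (A x))) j i.
  by rewrite mxE.
rewrite coefCM coef_adj_char_poly_mx // mxE.
rewrite exprS mulN1r mulNr mulNr mulrN opprK mulrCA; congr (_ * _).
by rewrite mulrA -expr2 sqrr_sign mul1r.
Qed.

Lemma is_derive_sigmaInf (mu : V -> R) dmu k : is_derive x v mu dmu ->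
  is_derive x v (fun y => sigmaInf k.+1 (mu y) (A y))
    (sigmaInf k (mu x) (A x) * dmu + \tr (Tinf k (mu x) (A x) *m B)).
Proof.
move=> Dmu.
pose dsigma m := if m is m'.+1 then \tr (newton m' (A x) *m B) else 0.
have Dsigma m : is_derive x v (fun y => sigma m (A y)) (dsigma m).
  rewrite /dsigma; case: m => [|m]; last exact: is_derive_sigma.
  by under eq_fun do rewrite sigma0; exact: is_derive_cst.
apply: is_derive_eqr.
  apply: is_derive_sumr => j; apply: is_derive_mulr (Dsigma _).
  exact: is_derive_mulr (is_derive_exprn _ Dmu) (is_derive_cstr _ _ _).
rewrite /= big_split /= addrC; congr (_ + _).
  rewrite big_ord_recl /= !(mul0r, mulr0, add0r) /sigmaInf mulr_suml.
  apply: eq_bigr => j _.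
  rewrite mulr0 add0r /bump /= add1n subSS factS natrM invfM add0n.
  by field; rewrite pnatr_eq0 -lt0n fact_gt0 addrC natr1 pnatr_eq0.
rewrite big_ord_recr /= subnn mulr0 addr0 Tinf_newton mulmx_suml raddf_sum /=.
apply: eq_bigr => j _; have le_jk : (j <= k)%N by rewrite -ltnS.
by rewrite -scalemxAl mxtraceZ /dsigma subSn.
Qed.

End JacobiFormula.

Lemma mxtrace_mul_commutator (T : comPzRingType) n (N M G : 'M[T]_n) :
  M *m N = N *m M -> \tr (N *m (G *m M - M *m G)) = 0.
Proof.
move=> MN; rewrite mulmxBr raddfB /= mulmxA mxtrace_mulC mulmxA MN -mulmxA.
by rewrite subrr.
Qed.

Lemma posdef_unitmx (R : numFieldType) n (G : 'M[R]_n) :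
  (forall u : 'cV[R]_n, u != 0 -> 0 < (u^T *m G *m u) 0 0) -> G \in unitmx.
Proof.
move=> Gpos; rewrite unitmxE unitfE; apply/negP => /det0P[w w_neq0 wG0].
have := Gpos w^T; rewrite trmx_eq0 trmxK wG0 mul0mx mxE ltxx.
by move/(_ w_neq0).
Qed.

Section Chart.
Variables (R : realType) (n : nat).
Local Notation V := 'cV[R]_n.

Lemma derive_coord_sum (W : normedModType R) (f : V -> W) (p v : V) :
  differentiable f p -> \sum_l v l 0 *: 'D_(coordvec R l) f p = 'D_v f p.
Proof.
move=> df; have vE : v = \sum_l v l 0 *: coordvec R l.
  by rewrite {1}(matrix_sum_delta v); apply: eq_bigr => l _; rewrite big_ord1.
rewrite (deriveE _ df) [in RHS]vE linear_sum; apply: eq_bigr => l _.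
by rewrite linearZ (deriveE _ df).
Qed.

Lemma innerBZ (g : V -> 'M[R]_n) (p u w z : V) (s : R) :
  inner g p (u - s *: w) z = inner g p u z - s * inner g p w z.
Proof. by rewrite /inner linearB linearZ /= !mulmxBl -!scalemxAl !mxE. Qed.

Lemma inner_grad (g : V -> 'M[R]_n) (f : V -> R) (p v : V) :
  (g p)^T = g p -> g p \in unitmx ->
  inner g p (grad g f p) v = \sum_l v l 0 * 'D_(coordvec R l) f p.
Proof.
move=> gT gU; rewrite /inner /grad trmx_mul trmx_inv gT -!mulmxA mulKmx //.
by rewrite mxE; apply: eq_bigr => l _; rewrite !mxE mulrC.
Qed.

Definition connection_mx (g : V -> 'M[R]_n) (v p : V) : 'M[R]_n :=
  \matrix_(k, l) \sum_i christoffel g p k i l * v i 0.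

Lemma covDE (g : V -> 'M[R]_n) (A : V -> 'M[R]_n) (v p : V) : derivable A p v ->
  covD g A v p =
    'D_v A p + connection_mx g v p *m A p - A p *m connection_mx g v p.
Proof.
move=> dA; apply/matrixP => k j; rewrite (derive_mx dA) !mxE; congr (_ + _ - _).
  rewrite exchange_big /=; apply: eq_bigr => l _; rewrite mxE mulr_suml.
  by apply: eq_bigr.
rewrite exchange_big /=; apply: eq_bigr => l _; rewrite mxE mulr_sumr.
by apply: eq_bigr => i _; rewrite mulrC.
Qed.

End Chart.

Theorem mainTheorem1 (R : realType) (n : nat) (U : set 'cV[R]_n)
  (g : 'cV[R]_n -> 'M[R]_n) (A : 'cV[R]_n -> 'M[R]_n) (mu1 : 'cV[R]_n -> R)
  (k : nat) :
  open U ->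
  (* g is a Riemannian metric on U: symmetric, positive definite, smooth *)
  (forall x, U x -> (g x)^T = g x) ->
  (forall x, U x -> forall u : 'cV[R]_n, u != 0 -> 0 < (u^T *m g x *m u) 0 0) ->
  (forall x, U x -> differentiable g x) ->
  (* A is a smooth (1,1)-tensor field, self-adjoint w.r.t. g *)
  (forall x, U x -> (g x *m A x)^T = g x *m A x) ->
  (forall x, U x -> differentiable A x) ->
  (* mu1 is a smooth function *)
  (forall x, U x -> differentiable mu1 x) ->
  (1 <= k)%N ->
  forall (p : 'cV[R]_n), U p -> forall v : 'cV[R]_n,
    \tr (Tinf (k - 1) (mu1 p) (A p) *m covD g A v p)
    = inner g p (grad g (fun x => sigmaInf k (mu1 x) (A x)) p
                 - sigmaInf (k - 1) (mu1 p) (A p) *: grad g mu1 p) v.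
Proof.
move=> _ gT gpos _ _ dA dmu k_gt0 p Up v.
case: k k_gt0 => // k _; rewrite subn1 /=.
set F := fun x => sigmaInf k.+1 (mu1 x) (A x).
set s := sigmaInf k (mu1 p) (A p); set T := Tinf k (mu1 p) (A p).
have dAp := dA p Up; have dmup := dmu p Up.
have gU : g p \in unitmx := posdef_unitmx (gpos p Up).
have DF w : 'D_w F p = s * 'D_w mu1 p + \tr (T *m 'D_w A p).
  apply/derive_val/is_derive_sigmaInf => [i j|]; first exact: is_derive_mx_entry.
  exact/derivableP/diff_derivable.
rewrite covDE; last exact: diff_derivable.
rewrite -addrA mulmxDr mxtraceD mxtrace_mul_commutator ?Tinf_comm // addr0.
rewrite -(derive_coord_sum v dAp) mulmx_sumr raddf_sum /=.
(* [DF] holds in every direction, in particular along the coordinate vectors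
   used by [grad]; its right-hand side is linear in the direction. *)
rewrite innerBZ !inner_grad ?gT // [X in _ = X - _](eq_bigr (fun l =>
  v l 0 * (s * 'D_(coordvec R l) mu1 p + \tr (T *m 'D_(coordvec R l) A p)))); last first.
  by move=> l _; rewrite -DF.
rewrite mulr_sumr -sumrB; apply: eq_bigr => l _.
by rewrite mulrDr mulrCA addrC addKr -scalemxAr mxtraceZ.
Qed.
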